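(* Let $Q$ be a commutative automorphic loop of nilpotency class $3$. Then $(a,(b,c,d),(e,f,g))=((a,b,c),d,(e,f,g))=((a,b,c),(d,e,f),g)=1$ for every $a,b,c,d,e,f,g\in Q$.
   Context: A loop is a set with a binary operation such that all left and right translations $L_a:b\mapsto ab$, $R_a:b\mapsto ba$ are bijections and there is a two-sided identity $1$. The inner mapping group is the stabilizer of $1$ in the group generated by all translations; $Q$ is automorphic if all inner mappings are automorphisms. The associator $(a,b,c)$ is defined by $(ab)c=(a(bc))(a,b,c)$. The center $Z(Q)$ is the set of elements fixed by all inner mappings; $Z_0=1$, $Z_{i+1}(Q)$ is the preimage of $Z(Q/Z_i(Q))$, and $Q$ has nilpotency class $n$ if $Z_{n-1}(Q)\neq Q=Z_n(Q)$. *)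

From mathcomp Require Import ssreflect ssrfun.

Set Implicit Arguments.
Unset Strict Implicit.

Section LoopDefs.
Variables (T : Type) (mul : T -> T -> T) (one : T).

Definition Ltr (a : T) : T -> T := fun b => mul a b.
Definition Rtr (a : T) : T -> T := fun b => mul b a.

Definition is_loop : Prop :=
  (forall a, bijective (Ltr a)) /\ (forall a, bijective (Rtr a)) /\
  (forall x, mul one x = x) /\ (forall x, mul x one = x).

Inductive mlt : (T -> T) -> Prop :=
  | mlt_id : mlt id
  | mlt_L f a : mlt f -> mlt (Ltr a \o f)
  | mlt_R f a : mlt f -> mlt (Rtr a \o f)
  | mlt_Linv f a g : mlt f -> cancel (Ltr a) g -> cancel g (Ltr a) -> mlt (g \o f)
  | mlt_Rinv f a g : mlt f -> cancel (Rtr a) g -> cancel g (Rtr a) -> mlt (g \o f).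

Definition inner (f : T -> T) : Prop := mlt f /\ f one = one.

(* Automorphic loop: every inner mapping is an automorphism (inner mappings
   are bijections, so it suffices that they are homomorphisms). *)
Definition automorphic : Prop :=
  forall f, inner f -> forall x y, f (mul x y) = mul (f x) (f y).

Definition commutative_loop : Prop := forall x y, mul x y = mul y x.

(* x and y lie in the same left coset of N : x N = y N (for normal N this is
   the congruence defining Q/N). *)
Definition cong (N : T -> Prop) (x y : T) : Prop := exists n, N n /\ x = mul y n.

(* Z_0 = 1 and Z_{i+1} = preimage of Z(Q/Z_i), where
   the center of a loop is the set of elements fixed by all inner mappings.
   The inner mappings of Q/N are exactly the maps induced by the f in Mlt(Q)
   with f(1) in N, so  a N  is in Z(Q/N)  iff  f(a) N = a N  for all such f.
   For i = 0 this gives Z_1 = Z(Q) = {a | f a = a for all inner f}. *)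
Fixpoint Zser (i : nat) : T -> Prop :=
  match i with
  | O => fun a => a = one
  | S i => fun a => forall f, mlt f -> Zser i (f one) -> cong (Zser i) (f a) a
  end.

Definition nilpotency_class (n : nat) : Prop :=
  (forall a, Zser n a) /\ ~ (forall a, Zser (Nat.pred n) a).

(* Associator (a,b,c): (ab)c = (a(bc)) (a,b,c); [ldiv x y] is x\y. *)
Definition assoc (ldiv : T -> T -> T) (a b c : T) : T :=
  ldiv (mul a (mul b c)) (mul (mul a b) c).

End LoopDefs.

From Pilot Require Import Defs.
From mathcomp Require Import ssreflect ssrfun.

Set Implicit Arguments.
Unset Strict Implicit.

(* Write Z for the center.  By nilpotency, every associator u = (a,b,c) is
   central modulo Z (u lies in Z_2); then all associators (x,u,w) and (u,x,w)
   are central.  When every (x,y,w) is central, w |-> (x,y,w) is a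
   homomorphism into Z: it is w\psi(w) for the inner map
   psi = L_y^-1 L_x^-1 L_xy, which is an automorphism.  A homomorphism into
   the abelian group Z kills associators, so (x,y,(e,f,g)) = 1. *)

Declare Scope loop_scope.
Local Open Scope loop_scope.

Section CommutativeAutomorphicLoop.

Variables (T : Type) (mul : T -> T -> T) (one : T) (ldiv : T -> T -> T).
Local Notation "x * y" := (mul x y) : loop_scope.
Local Notation assoc := (assoc mul ldiv).

Hypothesis mulL_bij : forall a, bijective (Ltr mul a).
Hypothesis mulx1 : forall x, x * one = x.
Hypothesis mul_ldiv : forall x y, x * ldiv x y = y.
Hypothesis mulC : commutative mul.
Hypothesis aut : automorphic mul one.

Lemma mul_cancel_l x y z : x * y = x * z -> y = z.
Proof. by case: (mulL_bij x) => g gK _ E; rewrite -[y]gK -[z]gK /Ltr E. Qed.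

Lemma mul_cancel_r x y z : y * x = z * x -> y = z.
Proof. by rewrite (mulC y) (mulC z) => /mul_cancel_l. Qed.

Lemma ldivK x y : ldiv x (x * y) = y.
Proof. by apply: (@mul_cancel_l x); rewrite mul_ldiv. Qed.

Lemma ldiv_eq x y z : x * y = z -> ldiv x z = y.
Proof. by move=> <-; apply: ldivK. Qed.

Lemma ldivv x : ldiv x x = one.
Proof. exact/ldiv_eq/mulx1. Qed.

Definition inner_L x y w := ldiv (x * y) (x * (y * w)).

Lemma mlt_inner_L x y : mlt mul (inner_L x y).
Proof.
exact: (mlt_Linv (mlt_L x (mlt_L y (mlt_id mul))) (ldivK (x * y)) (mul_ldiv (x * y))).
Qed.

Lemma inner_L1 x y : inner_L x y one = one.
Proof. by rewrite /inner_L mulx1 ldivv. Qed.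

Lemma inner_inner_L x y : inner mul one (inner_L x y).
Proof. by split; [exact: mlt_inner_L | exact: inner_L1]. Qed.

Definition central k := forall f, inner mul one f -> f k = k.

Lemma central_one : central one.
Proof. by move=> f []. Qed.

Lemma central_mul k1 k2 : central k1 -> central k2 -> central (k1 * k2).
Proof. by move=> c1 c2 f Hf; rewrite (aut Hf) c1 // c2. Qed.

Lemma central_ldiv k1 k2 : central k1 -> central k2 -> central (ldiv k1 k2).
Proof.
move=> c1 c2 f Hf.
have -> : f (ldiv k1 k2) = ldiv (f k1) (f k2).
  by apply/esym/ldiv_eq; rewrite -(aut Hf) mul_ldiv.
by rewrite c1 // c2.
Qed.

Lemma mulA_central k x y : central k -> x * (y * k) = (x * y) * k.
Proof.
move=> ck; have E := ck _ (inner_inner_L x y).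
by rewrite -[in RHS]E mul_ldiv.
Qed.

Lemma mulAC_central k x m : central k -> (x * m) * k = (x * k) * m.
Proof. by move=> ck; rewrite (mulC (x * k)) mulA_central // (mulC m). Qed.

Lemma Zser1_central k : Zser mul one 1 k -> central k.
Proof.
move=> Zk f [mf f1]; have [n [n1 ->]] := Zk f mf f1.
by rewrite n1 mulx1.
Qed.

Lemma Zser1_one : Zser mul one 1 one.
Proof. by move=> f _ f1; exists one; split; rewrite // f1 mulx1. Qed.

Lemma Zser2_one : Zser mul one 2 one.
Proof. by move=> f _ Zf1; exists (f one); split; rewrite // mulC mulx1. Qed.

(* nZ is central in Q/Z, phrased without forming the quotient. *)
Definition central_mod_Z n :=
  forall y w, exists2 k, central k & y * (n * w) = ((y * w) * n) * k.

Lemma Zser2_central_mod_Z n : Zser mul one 2 n -> central_mod_Z n.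
Proof.
move=> Zn y w.
have Z1 : Zser mul one 1 (inner_L y w one) by rewrite inner_L1; exact: Zser1_one.
have [k [Zk E]] := Zn _ (mlt_inner_L y w) Z1.
have ck := Zser1_central Zk.
exists k => //.
by rewrite (mulC n) -(mul_ldiv (y * w) (y * (w * n))) -/(inner_L y w n) E mulA_central.
Qed.

Lemma central_mod_Z_mulr n t : central_mod_Z n -> central t -> central_mod_Z (n * t).
Proof.
move=> Cn ct y w; have [k ck E] := Cn y w.
exists k => //.
have -> : (n * t) * w = (n * w) * t by rewrite mulC mulA_central // (mulC w).
by rewrite mulA_central // E mulA_central // mulAC_central.
Qed.

Lemma central_mod_Z_inv u m : central_mod_Z m -> u * m = one -> central_mod_Z u.
Proof.
move=> Cm um y w.
have mu : m * u = one by rewrite mulC.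
have [k3 ck3 E3] := Cm y (u * w).
have [k5 ck5 E5] := Cm w u.
have [k6 ck6 E6] := Cm (y * w) u.
rewrite mu mulx1 in E5; rewrite mu mulx1 in E6.
have ck35 : central (k3 * k5) by exact: central_mul.
have ck : central (ldiv (k3 * k5) one) by exact: central_ldiv ck35 central_one.
have Ew : w = ((u * w) * m) * k5 by rewrite {1}E5 (mulC w).
have EK : ((y * (u * w)) * (k3 * k5)) * m = (((y * w) * u) * k6) * m.
  rewrite -mulAC_central // (mulA_central _ _ ck5) -E3 (mulC m) -mulA_central //.
  by rewrite -Ew -mulAC_central // -E6 mulx1.
exists (k6 * ldiv (k3 * k5) one); first exact: central_mul.
by rewrite (mulA_central _ _ ck) -(mul_cancel_r EK) -(mulA_central _ _ ck) mul_ldiv mulx1.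
Qed.

Section NilpotentClassThree.

Hypothesis Zser3 : forall a, Zser mul one 3 a.

(* Z_3 = Q applied to c and the inner map inner_L a b gives
   a(bc) = (ab)(cn) with n in Z_2; a short computation then exhibits
   an inverse of (a,b,c) of the form n t with t central. *)
Lemma assoc_inv_central_mod_Z a b c :
  exists2 m, central_mod_Z m & assoc a b c * m = one.
Proof.
have Z2 : Zser mul one 2 (inner_L a b one) by rewrite inner_L1; exact: Zser2_one.
have [n [Zn E]] := Zser3 c (mlt_inner_L a b) Z2.
have Cn := Zser2_central_mod_Z Zn.
set p := a * (b * c); set u := assoc a b c.
have pu : p * u = (a * b) * c by rewrite mul_ldiv.
have Ep : p = (a * b) * (c * n) by rewrite -E mul_ldiv.
have [k1 ck1 E1] := Cn (a * b) c.
have [k2 ck2 E2] := Cn p u.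
have ct : central (ldiv k2 k1) by exact: central_ldiv.
exists (n * ldiv k2 k1); first exact: central_mod_Z_mulr.
apply: (@mul_cancel_l p).
rewrite mulx1 (mulA_central u n ct) (mulA_central p _ ct) (mulC u) E2 pu.
by rewrite -(mulA_central _ _ ct) mul_ldiv -E1 (mulC n) -Ep.
Qed.

Lemma assoc_central_mod_Z a b c : central_mod_Z (assoc a b c).
Proof. by have [m Cm um] := assoc_inv_central_mod_Z a b c; exact: central_mod_Z_inv um. Qed.

End NilpotentClassThree.

Lemma central_mod_Z_assoc_m u x w : central_mod_Z u -> central (assoc x u w).
Proof.
move=> Cu; have [k1 ck1 E1] := Cu w x; have [k2 ck2 E2] := Cu x w.
rewrite /Defs.assoc (mulC x u) (mulC (u * x)) E1 (mulC w x) E2.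
have -> : ldiv (((x * w) * u) * k2) (((x * w) * u) * k1) = ldiv k2 k1.
  by apply: ldiv_eq; rewrite -mulA_central ?mul_ldiv //; exact: central_ldiv.
exact: central_ldiv.
Qed.

Lemma central_mod_Z_assoc_l u x w : central_mod_Z u -> central (assoc u x w).
Proof.
move=> Cu; have [k1 ck1 E1] := Cu w x.
by rewrite /Defs.assoc (mulC (u * x)) E1 (mulC u (x * w)) (mulC x w) ldivK.
Qed.

Section CentralAssociators.

Variables x y : T.
Hypothesis central_assoc_xy : forall w, central (assoc x y w).

Lemma assoc_morph : {morph assoc x y : w1 w2 / w1 * w2}.
Proof.
pose psi w := ldiv y (ldiv x ((x * y) * w)).
have mpsi : mlt mul psi.
  exact: (mlt_Linv (mlt_Linv (mlt_L (x * y) (mlt_id mul)) (ldivK x) (mul_ldiv x))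
                   (ldivK y) (mul_ldiv y)).
have ipsi : inner mul one psi by split=> //; rewrite /psi mulx1 ldivK ldivv.
have psiE w : psi w = w * assoc x y w.
  rewrite /psi; have cw := central_assoc_xy w; set h := assoc x y w in cw *.
  have -> : (x * y) * w = x * (y * (w * h)).
    by rewrite (mulA_central y w cw) (mulA_central x _ cw) mul_ldiv.
  by rewrite !ldivK.
move=> w1 w2; apply: (@mul_cancel_l (w1 * w2)).
rewrite -psiE (aut ipsi) !psiE mulA_central // (mulC (w1 * _) w2) mulA_central //.
by rewrite (mulC w2) -mulA_central.
Qed.

Lemma assoc_assoc_r e f g : assoc x y (assoc e f g) = one.
Proof.
have := congr1 (assoc x y) (mul_ldiv (e * (f * g)) ((e * f) * g)).
rewrite !assoc_morph => E.
apply: (@mul_cancel_l (assoc x y e * (assoc x y f * assoc x y g))).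
by rewrite E mulx1 mulA_central.
Qed.

End CentralAssociators.

Lemma assoc_swap_eq1 u v g : assoc g v u = one -> assoc u v g = one.
Proof.
move=> E; have A : (g * v) * u = g * (v * u).
  by rewrite -(mul_ldiv (g * (v * u)) ((g * v) * u)) -/(assoc g v u) E mulx1.
by rewrite /Defs.assoc (mulC (u * v)) (mulC u v) -A (mulC (g * v)) (mulC g) ldivv.
Qed.

End CommutativeAutomorphicLoop.

Theorem lemma2p6 (T : Type) (mul : T -> T -> T) (one : T) (ldiv : T -> T -> T)
  (hloop : is_loop mul one)
  (hldiv : forall x y, mul x (ldiv x y) = y)
  (hcomm : commutative_loop mul)
  (haut : automorphic mul one)
  (hcl : nilpotency_class mul one 3) :
  forall a b c d e f g : T,
    assoc mul ldiv a (assoc mul ldiv b c d) (assoc mul ldiv e f g) = one /\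
    assoc mul ldiv (assoc mul ldiv a b c) d (assoc mul ldiv e f g) = one /\
    assoc mul ldiv (assoc mul ldiv a b c) (assoc mul ldiv d e f) g = one.
Proof.
case: hloop => hL [_ [_ hx1]]; case: hcl => hZ3 _.
have Cassoc := assoc_central_mod_Z hL hx1 hldiv hcomm haut hZ3.
move=> a b c d e f g; split; [|split].
- apply: assoc_assoc_r => // w.
  exact: central_mod_Z_assoc_m (Cassoc b c d).
- apply: assoc_assoc_r => // w.
  exact: central_mod_Z_assoc_l (Cassoc a b c).
- apply: assoc_swap_eq1 => //; apply: assoc_assoc_r => // w.
  exact: central_mod_Z_assoc_m (Cassoc d e f).
Qed.
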